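(* There exists $c\in\mathbb{N}$ such that for all $l\in\mathbb{N}$ and all $x,y\in\{0,1\}^*$, $$\mathrm{FS}^{l+c}(xy)\leq 2|x|+\mathrm{FS}^{l}(y)+2.$$
   Context: A finite-state transducer (FST) is a 4-tuple $T=(Q,\delta,\nu,q_0)$ with $Q$ a nonempty finite set of states, $\delta:Q\times\{0,1\}\to Q$ the transition function, $\nu:Q\times\{0,1\}\to\{0,1\}^*$ the output function, and $q_0\in Q$ the initial state; every state is assumed reachable from $q_0$. The extended transition function is $\widehat\delta(\lambda)=q_0$, $\widehat\delta(xa)=\delta(\widehat\delta(x),a)$, and the output of $T$ on $x$ is defined by $T(\lambda)=\lambda$, $T(xa)=T(x)\nu(\widehat\delta(x),a)$. Fix a standard binary representation $\sigma_T$ of each FST $T$ and let $|T|=|\sigma_T|$; let $\mathrm{FST}^{\leq k}=\{T\in\mathrm{FST}: |T|\le k\}$. For $k\in\mathbb{N}$ and $x\in\{0,1\}^*$, $\mathrm{FS}^k(x)=\min\{|p| : p\in\{0,1\}^*,\ \exists T\in\mathrm{FST}^{\leq k},\ T(p)=x\}$. Here $xy$ denotes concatenation. *)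

From mathcomp Require Import all_boot.
From Stdlib Require Import ClassicalEpsilon.

Set Implicit Arguments.
Unset Strict Implicit.
Unset Printing Implicit Defensive.

(* Binary strings are [seq bool] (false = 0, true = 1).
   Concrete model of an FST: the state set is Q = 'I_n.+1 = {0,...,n}
   (nonempty), the initial state is q0 = 0 (every FST is isomorphic to one of
   this form), delta : Q -> {0,1} -> Q, nu : Q -> {0,1} -> {0,1}^*, and every
   state is reachable from q0. *)

Definition dhat_of (n : nat) (d : 'I_n.+1 -> bool -> 'I_n.+1) (w : seq bool)
  : 'I_n.+1 := foldl d ord0 w.

Record FST := MkFST {
  fst_n : nat;
  fst_delta : 'I_fst_n.+1 -> bool -> 'I_fst_n.+1;
  fst_nu : 'I_fst_n.+1 -> bool -> seq bool;
  fst_reach : forall q : 'I_fst_n.+1, exists w : seq bool, dhat_of fst_delta w = q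
}.

Definition dhat (T : FST) (w : seq bool) : 'I_(fst_n T).+1 :=
  dhat_of (@fst_delta T) w.

(* Output T(w): T(lambda) = lambda, T(xa) = T(x) nu(dhat(x), a). *)
Fixpoint fst_out_rev (T : FST) (rw : seq bool) : seq bool :=
  match rw with
  | [::] => [::]
  | a :: rx => fst_out_rev T rx ++ fst_nu (dhat T (rev rx)) a
  end.
Definition fst_run (T : FST) (w : seq bool) : seq bool := fst_out_rev T (rev w).

(* binary expansion of a natural number (most significant bit first; 0 |-> empty) *)
Fixpoint bin_aux (fuel m : nat) : seq bool :=
  match fuel with
  | 0 => [::]
  | f.+1 => if m is 0 then [::] else rcons (bin_aux f m./2) (odd m)
  end.
Definition bin (m : nat) : seq bool := bin_aux m m.

Definition sdcode (s : seq bool) : seq bool :=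
  flatten [seq [:: b; b] | b <- s] ++ [:: false; true].

Definition enc_nat (m : nat) : seq bool := sdcode (bin m).

(* a transition target j from source i is encoded by the signed offset j - i:
   a sign bit followed by the self-delimiting binary code of |j - i| *)
Definition enc_offset (i j : nat) : seq bool :=
  if i <= j then false :: enc_nat (j - i) else true :: enc_nat (i - j).

Definition enc_state (T : FST) (q : 'I_(fst_n T).+1) : seq bool :=
  flatten [seq enc_offset q (fst_delta q b) ++ sdcode (fst_nu q b)
          | b <- [:: false; true]].

Definition sigma (T : FST) : seq bool :=
  enc_nat (fst_n T) ++ flatten [seq enc_state q | q <- enum 'I_(fst_n T).+1].

Definition fst_size (T : FST) : nat := size (sigma T).

Definition FS_len (k : nat) (x : seq bool) (n : nat) : Prop :=
  exists (p : seq bool) (T : FST), fst_size T <= k /\ fst_run T p = x /\ size p = n.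

Definition pbool (P : Prop) : bool :=
  if excluded_middle_informative P then true else false.

Lemma pboolP (P : Prop) : reflect P (pbool P).
Proof. by rewrite /pbool; case: excluded_middle_informative => H; constructor. Qed.

Lemma FS_ex (k : nat) (x : seq bool) :
  (exists n, FS_len k x n) -> exists n, pbool (FS_len k x n).
Proof. by case=> n Hn; exists n; apply/pboolP. Qed.

(* FS^k(x) = min { |p| : exists T in FST^{<=k}, T(p) = x };
   None encodes the minimum of the empty set (= +infinity). *)
Definition FS (k : nat) (x : seq bool) : option nat :=
  match excluded_middle_informative (exists n, FS_len k x n) with
  | left H => Some (ex_minn (FS_ex H))
  | right _ => None
  end.

Definition ole (a b : option nat) : Prop :=
  match a, b with
  | _, None => True
  | None, Some _ => False
  | Some m, Some n => m <= n
  end.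

(* Prefix the machine for [y] with a three-state gadget that reads the
   self-delimiting code of [x] two bits at a time, outputs one bit per pair,
   and on the terminator 01 jumps into a copy of the original machine.
   The gadget increases the number of input bits by [|sdcode x| = 2|x| + 2],
   and the description by a constant: the copied states keep their encodings
   because transitions are encoded by relative offsets, the three new states
   cost 54 bits, and the header [enc_nat n] grows by at most 4 bits. *)

From mathcomp Require Import all_boot zify.
From Stdlib Require Import ClassicalEpsilon.

Set Implicit Arguments.
Unset Strict Implicit.
Unset Printing Implicit Defensive.

Lemma bin_aux_fuel f f' m : m <= f -> m <= f' -> bin_aux f m = bin_aux f' m.
Proof.
elim: f f' m => [|f IH] [|f'] [|m] //= Hf Hf'.
by congr rcons; apply: IH; lia.
Qed.

Lemma size_binS m : size (bin m.+1) = (size (bin m.+1./2)).+1.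
Proof. by rewrite /bin /= size_rcons (@bin_aux_fuel m m.+1./2) //; lia. Qed.

Lemma size_bin_leq m m' : m <= m' -> size (bin m) <= size (bin m').
Proof.
elim: m' {-2}m' (leqnn m') m => [|k IH] [|m'] Hm' [|m] Hmm' //.
by rewrite !size_binS ltnS; apply: IH; lia.
Qed.

Lemma size_bin_double m : 0 < m -> size (bin m.*2) = (size (bin m)).+1.
Proof. by case: m => // m _; rewrite doubleS size_binS -doubleS doubleK. Qed.

Lemma size_bin_add3 m : size (bin m.+3) <= (size (bin m)).+2.
Proof.
case: m => [|m] //.
rewrite -(@size_bin_double m.+1) // -(@size_bin_double m.+1.*2); last lia.
by apply: size_bin_leq; lia.
Qed.

Lemma size_sdcode s : size (sdcode s) = 2 * size s + 2.
Proof.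
have size_dbl : size (flatten [seq [:: b; b] | b <- s]) = 2 * size s.
  by elim: s => //= b s ->; lia.
by rewrite size_cat size_dbl.
Qed.

Lemma size_enc_nat_add3 m : size (enc_nat m.+3) <= size (enc_nat m) + 4.
Proof. by rewrite !size_sdcode; have := size_bin_add3 m; lia. Qed.

Lemma enc_offset_add3 i j : enc_offset i.+3 j.+3 = enc_offset i j.
Proof. by rewrite /enc_offset !ltnS !subSS. Qed.

Lemma fst_sizeE T :
  fst_size T = size (enc_nat (fst_n T)) + \sum_(q < (fst_n T).+1) size (enc_state q).
Proof.
rewrite /fst_size /sigma size_cat size_flatten /shape -map_comp sumnE big_map.
by rewrite big_enum.
Qed.

Section Runs.
Variables (Q : Type) (d : Q -> bool -> Q) (nu : Q -> bool -> seq bool).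

Fixpoint run_from (q : Q) (w : seq bool) : seq bool :=
  if w is a :: w' then nu q a ++ run_from (d q a) w' else [::].

Lemma run_from_rcons q w a :
  run_from q (rcons w a) = run_from q w ++ nu (foldl d q w) a.
Proof. by elim: w q => [|b w IH] q /=; rewrite ?cats0 // IH catA. Qed.

End Runs.

Section Simulation.
Variables (Q Q' : Type) (d : Q -> bool -> Q) (nu : Q -> bool -> seq bool).
Variables (d' : Q' -> bool -> Q') (nu' : Q' -> bool -> seq bool) (f : Q -> Q').
Hypotheses (f_delta : forall q b, d' (f q) b = f (d q b))
           (f_nu : forall q b, nu' (f q) b = nu q b).

Lemma foldl_commute q w : foldl d' (f q) w = f (foldl d q w).
Proof. by elim: w q => [|b w IH] q //=; rewrite f_delta IH. Qed.

Lemma run_from_commute q w : run_from d' nu' (f q) w = run_from d nu q w.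
Proof. by elim: w q => [|b w IH] q //=; rewrite f_delta f_nu IH. Qed.

End Simulation.

Lemma fst_runE T w : fst_run T w = run_from (@fst_delta T) (@fst_nu T) ord0 w.
Proof.
elim/last_ind: w => [|w a IH] //.
by rewrite run_from_rcons -IH /fst_run rev_rcons /= revK.
Qed.

Section SdcodePrefix.
Variable T : FST.
Local Notation n := (fst_n T).

Definition shift3 (s : 'I_n.+1) : 'I_n.+4 := Ordinal (ltn_ord s : s.+3 < n.+4).

Lemma shift3_lift (s : 'I_n.+1) : lift ord0 (lift ord0 (lift ord0 s)) = shift3 s.
Proof. exact: val_inj. Qed.

(* States 0, 1, 2 decode [sdcode x] pair by pair: after a 0 (state 1) the
   bit 0 emits 0 and the bit 1 is the terminator 01, entering the copy
   [shift3] of [T]; after a 1 (state 2) the bit 1 emits 1, and the pair 10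
   never occurs. *)
Definition pre_delta (i : 'I_n.+4) (b : bool) : 'I_n.+4 :=
  match val i with
  | 0 => if b then Ordinal (isT : 2 < n.+4) else Ordinal (isT : 1 < n.+4)
  | 1 => if b then shift3 ord0 else ord0
  | 2 => ord0
  | j.+3 => shift3 (@fst_delta T (inord j) b)
  end.

Definition pre_nu (i : 'I_n.+4) (b : bool) : seq bool :=
  match val i with
  | 0 => [::]
  | 1 => if b then [::] else [:: false]
  | 2 => if b then [:: true] else [::]
  | j.+3 => @fst_nu T (inord j) b
  end.

Lemma pre_delta_shift3 s b : pre_delta (shift3 s) b = shift3 (fst_delta s b).
Proof. by rewrite /pre_delta /= inord_val. Qed.

Lemma pre_nu_shift3 s b : pre_nu (shift3 s) b = fst_nu s b.
Proof. by rewrite /pre_nu /= inord_val. Qed.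

Lemma pre_delta_reach (q : 'I_n.+4) : exists w, dhat_of pre_delta w = q.
Proof.
case: q => [[|[|[|j]]] Hj].
- by exists [::]; apply: val_inj.
- by exists [:: false]; apply: val_inj.
- by exists [:: true]; apply: val_inj.
have [w Hw] := fst_reach (Ordinal (Hj : j < n.+1)).
exists [:: false, true & w]; rewrite /dhat_of /= (foldl_commute pre_delta_shift3).
by apply: val_inj; rewrite /= -/(dhat_of _ w) Hw.
Qed.

Definition sdprefix_fst : FST := MkFST pre_nu pre_delta_reach.

Lemma sdprefix_fst_run x p :
  fst_run sdprefix_fst (sdcode x ++ p) = x ++ fst_run T p.
Proof.
rewrite !fst_runE; elim: x => [|b x IH] /=.
  by rewrite (run_from_commute pre_delta_shift3 pre_nu_shift3).
by case: b => /=; rewrite IH.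
Qed.

Lemma size_enc_state_shift3 s :
  size (@enc_state sdprefix_fst (shift3 s)) = size (enc_state s).
Proof.
by rewrite /enc_state /= !pre_nu_shift3 !enc_offset_add3 !inord_val.
Qed.

Lemma sdprefix_fst_size : fst_size sdprefix_fst <= fst_size T + 58.
Proof.
rewrite !fst_sizeE /= 3!big_ord_recl.
have sum_shifted : \sum_(s < n.+1)
    size (@enc_state sdprefix_fst (lift ord0 (lift ord0 (lift ord0 s))))
  = \sum_(s < n.+1) size (enc_state s).
  by apply: eq_bigr => s _; rewrite shift3_lift size_enc_state_shift3.
have -> : size (@enc_state sdprefix_fst ord0) = 16 by [].
have -> : size (@enc_state sdprefix_fst (lift ord0 ord0)) = 18 by [].
have -> : size (@enc_state sdprefix_fst (lift ord0 (lift ord0 ord0))) = 20 by [].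
rewrite sum_shifted; set S := \sum_(s < n.+1) _.
by have := size_enc_nat_add3 n; lia.
Qed.

End SdcodePrefix.

Lemma FS_le_len k x m : FS_len k x m -> ole (FS k x) (Some m).
Proof.
move=> Hm; rewrite /FS; case: excluded_middle_informative => [H|[]]; last by exists m.
by case: ex_minnP => m' _; apply; apply/pboolP.
Qed.

Lemma FS_Some_len k x m : FS k x = Some m -> FS_len k x m.
Proof.
rewrite /FS; case: excluded_middle_informative => // H.
by case: ex_minnP => m' Hm' _ [<-]; apply/pboolP.
Qed.

Theorem lemma4 :
  exists c : nat, forall (l : nat) (x y : seq bool),
    ole (FS (l + c) (x ++ y)) (omap (fun m => 2 * size x + m + 2) (FS l y)).
Proof.
exists 58 => l x y.
case Ey: (FS l y) => [m|] /=; last by case: (FS _ _).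
have [p [T [HT [Hy Hp]]]] := FS_Some_len Ey.
apply: FS_le_len; exists (sdcode x ++ p), (sdprefix_fst T); split.
  by have := sdprefix_fst_size T; lia.
by rewrite sdprefix_fst_run Hy size_cat size_sdcode Hp; split => //; lia.
Qed.
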